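(* Let $X$ solve $dX_t=\mu_X(X_t;\theta)\,dt+\sigma_X(X_t;\theta)\,dW_t$ on $\mathcal{X}=(x_l,x_r)$ and let $Y_t=V(X_t)$, with structure $\mathcal{S}=(\theta,V)$ ($\theta$ the data-generating parameter). Assume: $\mu_X(\cdot;\theta)$ and $\sigma_X^2(\cdot;\theta)>0$ are twice continuously differentiable; $V$ is strictly increasing and twice continuously differentiable with inverse $U=V^{-1}$; and the drift $\mu_Y$ and diffusion $\sigma_Y^2$ of $Y$ are nonparametrically identified from the discretely sampled process $\{Y_{i\Delta}\}$. Define the Lamperti transform $\gamma(x;\theta)=\int_{x^*}^x \frac{1}{\sigma_X(z;\theta)}dz$ for some $x^*\in\mathcal{X}$, with range $\bar{\mathcal{X}}=(\bar x_l,\bar x_r)$, $\bar x_l=\lim_{x\to x_l}\gamma(x;\theta)$, $\bar x_r=\lim_{x\to x_r}\gamma(x;\theta)$, and $$\mu_{\bar X}(\bar x;\vartheta)=\frac{\mu_X(\gamma^{-1}(\bar x;\vartheta);\vartheta)}{\sigma_X(\gamma^{-1}(\bar x;\vartheta);\vartheta)}-\frac12\frac{\partial\sigma_X}{\partial x}(\gamma^{-1}(\bar x;\vartheta);\vartheta).$$ Then $\mathcal{S}$ is identified if and only if the following holds: there exist no $\eta\neq0$ and $\tilde\theta\neq\theta$ such that $\mu_{\bar X}(\bar x;\tilde\theta)=\mu_{\bar X}(\bar x+\eta;\theta)$ for all $\bar x\in\bar{\mathcal{X}}$.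
   Context: For a structure $\mathcal{S}=(\theta,V)$ with $U=V^{-1}$, the drift and diffusion of $Y$ are $\mu_Y(y;\mathcal{S})=\frac{\mu_X(U(y);\theta)}{U'(y)}-\frac12\sigma_X^2(U(y);\theta)\frac{U''(y)}{U'(y)^3}$ and $\sigma_Y(y;\mathcal{S})=\frac{\sigma_X(U(y);\theta)}{U'(y)}$. Two structures are observationally equivalent ($\mathcal{S}\sim\tilde{\mathcal{S}}$) if they yield identical $\mu_Y(\cdot)$ and $\sigma_Y(\cdot)$ on the domain of $Y$. $\mathcal{S}$ is identified (within the model of admissible structures $(\tilde\theta,\tilde V)$, $\tilde\theta\in\Theta$, $\tilde V$ strictly increasing and twice continuously differentiable) if $\mathcal{S}\sim\tilde{\mathcal{S}}$ implies $\mathcal{S}=\tilde{\mathcal{S}}$. *)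

From Stdlib Require Import Reals ClassicalEpsilon.
From Coquelicot Require Import Coquelicot.
Open Scope R_scope.

Definition inX (xl xr : Rbar) (x : R) : Prop := Rbar_lt xl x /\ Rbar_lt x xr.

Definition C2_on (D : R -> Prop) (f : R -> R) : Prop :=
  forall x, D x ->
    ex_derive f x /\ ex_derive (Derive f) x /\ continuous (Derive (Derive f)) x.

(* Admissible transformation V: strictly increasing, C^2 on X, and with an
   inverse U = V^{-1} differentiable with nonzero derivative (V' > 0), so that
   the formulas for mu_Y, sigma_Y (which divide by U') make sense. *)
Definition admissible (xl xr : Rbar) (V : R -> R) : Prop :=
  (forall x y, inX xl xr x -> inX xl xr y -> x < y -> V x < V y) /\
  C2_on (inX xl xr) V /\
  (forall x, inX xl xr x -> 0 < Derive V x).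

Definition imageV (xl xr : Rbar) (V : R -> R) (y : R) : Prop :=
  exists x, inX xl xr x /\ V x = y.

(* U = V^{-1} on V(X) (chosen by classical description; unique since V is
   strictly increasing). *)
Definition Uinv (xl xr : Rbar) (V : R -> R) (y : R) : R :=
  epsilon (inhabits 0) (fun x => inX xl xr x /\ V x = y).

Section Model.
Context {Theta : Type} (mu sigma : Theta -> R -> R) (xl xr : Rbar).

Definition muY (th : Theta) (V : R -> R) (y : R) : R :=
  let U := Uinv xl xr V in
  mu th (U y) / Derive U y
  - / 2 * (sigma th (U y)) ^ 2 * Derive (Derive U) y / (Derive U y) ^ 3.

Definition sigmaY (th : Theta) (V : R -> R) (y : R) : R :=
  let U := Uinv xl xr V in
  sigma th (U y) / Derive U y.

Definition obs_equiv (th : Theta) (V : R -> R) (th' : Theta) (V' : R -> R) : Prop :=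
  (forall y, imageV xl xr V y <-> imageV xl xr V' y) /\
  (forall y, imageV xl xr V y ->
     muY th V y = muY th' V' y /\ sigmaY th V y = sigmaY th' V' y).

Definition identified (th : Theta) (V : R -> R) : Prop :=
  forall th' V', admissible xl xr V' -> obs_equiv th V th' V' ->
    th' = th /\ (forall x, inX xl xr x -> V' x = V x).

Definition gamma (xstar : R) (th : Theta) (x : R) : R :=
  RInt (fun z => / sigma th z) xstar x.

Definition inXbar (xstar : R) (th : Theta) (xb : R) : Prop :=
  exists x, inX xl xr x /\ gamma xstar th x = xb.

Definition gamma_inv (xstar : R) (th : Theta) (xb : R) : R :=
  epsilon (inhabits 0) (fun x => inX xl xr x /\ gamma xstar th x = xb).

Definition muXbar (xstar : R) (th : Theta) (xb : R) : R :=
  let x := gamma_inv xstar th xb in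
  mu th x / sigma th x - / 2 * Derive (sigma th) x.

End Model.

From Stdlib Require Import Reals Ranalysis5 Lra ClassicalEpsilon Classical.
From Coquelicot Require Import Coquelicot.
Open Scope R_scope.

(* The Lamperti transform of Y, L(y) = γ(U(y); θ), has derivative 1/σ_Y, and the drift
   of the transformed process, μ_X̄(L(y); θ) = μ_Y(y)/σ_Y(y) - σ_Y'(y)/2, depends only on
   the observable pair (μ_Y, σ_Y).  Hence observationally equivalent structures have
   Lamperti transforms differing by a constant η on the domain of Y, and their Lamperti
   drifts are η-shifts of each other; when only the trivial shift exists the transforms
   coincide and V is recovered from γ(·; θ).  Conversely, a nontrivial shift (θ', η)
   yields the observationally equivalent structure (θ', V ∘ γ(·; θ)⁻¹ ∘ (γ(·; θ') + η)),
   which differs from (θ, V). *)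

Definition is_interval (D : R -> Prop) : Prop :=
  forall a b z, D a -> D b -> a <= z <= b -> D z.

Lemma is_interval_between D a b z :
  is_interval D -> D a -> D b -> Rmin a b <= z <= Rmax a b -> D z.
Proof.
  intros HD Ha Hb Hz. destruct (Rle_dec a b).
  - rewrite Rmin_left, Rmax_right in Hz by lra. exact (HD a b z Ha Hb Hz).
  - rewrite Rmin_right, Rmax_left in Hz by lra. exact (HD b a z Hb Ha Hz).
Qed.

Lemma open_inX xl xr : open (inX xl xr).
Proof. apply open_and; [apply open_Rbar_gt | apply open_Rbar_lt]. Qed.

Lemma is_interval_inX xl xr : is_interval (inX xl xr).
Proof.
  intros a b z [Ha1 Ha2] [Hb1 Hb2] [H1 H2]. split.
  - destruct xl as [l| |]; simpl in *; auto; lra.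
  - destruct xr as [r| |]; simpl in *; auto; lra.
Qed.

Lemma open_bracket D x : open D -> D x -> exists a b, D a /\ D b /\ a < x < b.
Proof.
  intros HD Hx. destruct (HD x Hx) as [e He]. pose proof (cond_pos e).
  exists (x - e / 2), (x + e / 2).
  split; [|split]; [apply He.. | lra]; apply Rabs_lt_between'; lra.
Qed.

Lemma continuity_pt_ex_derive f x : ex_derive f x -> continuity_pt f x.
Proof.
  intros H. apply continuity_pt_filterlim.
  exact (@ex_derive_continuous R_AbsRing R_NormedModule f x H).
Qed.

Lemma is_derive_0_const D f : is_interval D ->
  (forall x, D x -> is_derive f x 0) -> forall a b, D a -> D b -> f a = f b.
Proof.
  intros HD Hf a b Ha Hb.
  assert (Hab : forall z, Rmin a b <= z <= Rmax a b -> D z)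
    by (intros; apply (is_interval_between D a b); auto).
  destruct (MVT_gen f a b (fun _ => 0)) as [c [_ E]].
  - intros z Hz. apply Hf, Hab. lra.
  - intros z Hz. apply continuity_pt_ex_derive. eexists. apply Hf, Hab, Hz.
  - lra.
Qed.

Definition image (D : R -> Prop) (f : R -> R) (y : R) : Prop :=
  exists x, D x /\ f x = y.

Definition inverse (D : R -> Prop) (f : R -> R) (y : R) : R :=
  epsilon (inhabits 0) (fun x => D x /\ f x = y).

Section Inverse.
Variables (D : R -> Prop) (f : R -> R).
Hypothesis D_open : open D.
Hypothesis D_interval : is_interval D.
Hypothesis f_incr : forall x y, D x -> D y -> x < y -> f x < f y.
Hypothesis f_derive : forall x, D x -> ex_derive f x.

Lemma inverse_spec y : image D f y -> D (inverse D f y) /\ f (inverse D f y) = y.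
Proof. exact (epsilon_spec (inhabits 0) (fun x => D x /\ f x = y)). Qed.

Lemma incr_le x y : D x -> D y -> f x <= f y -> x <= y.
Proof.
  intros Hx Hy H. destruct (Rle_or_lt x y) as [h|h]; auto.
  pose proof (f_incr y x Hy Hx h). lra.
Qed.

Lemma incr_inj x y : D x -> D y -> f x = f y -> x = y.
Proof. intros Hx Hy E. apply Rle_antisym; apply incr_le; auto; lra. Qed.

Lemma inverse_f x : D x -> inverse D f (f x) = x.
Proof.
  intros Hx. destruct (inverse_spec (f x)) as [H1 H2]; [exists x; auto|].
  apply incr_inj; auto.
Qed.

Lemma inverse_incr y1 y2 :
  image D f y1 -> image D f y2 -> y1 < y2 -> inverse D f y1 < inverse D f y2.
Proof.
  intros H1 H2 h. destruct (inverse_spec _ H1) as [D1 E1], (inverse_spec _ H2) as [D2 E2].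
  destruct (Rle_or_lt (inverse D f y2) (inverse D f y1)) as [k|k]; auto.
  destruct (Rle_lt_or_eq_dec _ _ k) as [k'|k'].
  - pose proof (f_incr _ _ D2 D1 k'). lra.
  - rewrite k' in E2. lra.
Qed.

Lemma image_between a b z : D a -> D b -> f a <= z <= f b -> image D f z.
Proof.
  intros Ha Hb [h1 h2].
  destruct (Req_dec z (f a)) as [-> | na]; [exists a; auto|].
  destruct (Req_dec z (f b)) as [-> | nb]; [exists b; auto|].
  assert (hab : a < b).
  { destruct (Rle_or_lt b a) as [k|k]; auto.
    destruct (Rle_lt_or_eq_dec _ _ k) as [k'| ->]; [pose proof (f_incr _ _ Hb Ha k')|]; lra. }
  destruct (IVT_interv (fun t => f t - z) a b) as [x [Hx E]]; [|lra|lra|lra|].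
  - intros t Ht. apply continuity_pt_minus; [|apply continuity_pt_const; intros ? ?; auto].
    apply continuity_pt_ex_derive, f_derive, (D_interval a b); auto.
  - exists x. split; [apply (D_interval a b); auto | lra].
Qed.

Lemma image_bracket y : image D f y ->
  exists a b, D a /\ D b /\ a < inverse D f y < b /\ f a < y < f b.
Proof.
  intros Hy. destruct (inverse_spec y Hy) as [Dx Ex].
  destruct (open_bracket D _ D_open Dx) as [a [b [Ha [Hb [h1 h2]]]]].
  exists a, b. pose proof (f_incr _ _ Ha Dx h1). pose proof (f_incr _ _ Dx Hb h2).
  rewrite Ex in *. repeat split; auto.
Qed.

Lemma is_interval_image : is_interval (image D f).
Proof.
  intros y1 y2 z H1 H2 Hz.
  destruct (inverse_spec _ H1) as [D1 E1], (inverse_spec _ H2) as [D2 E2].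
  apply (image_between (inverse D f y1) (inverse D f y2)); auto; lra.
Qed.

Lemma open_image : open (image D f).
Proof.
  intros y Hy. destruct (image_bracket y Hy) as [a [b [Ha [Hb [_ [k1 k2]]]]]].
  apply (locally_open (fun z => f a < z /\ z < f b)); [| | lra].
  - apply open_and; [apply open_gt | apply open_lt].
  - intros z Hz. apply (image_between a b); auto; lra.
Qed.

Lemma continuity_pt_inverse y : image D f y -> continuity_pt (inverse D f) y.
Proof.
  intros Hy. destruct (image_bracket y Hy) as [a [b [Ha [Hb [[h1 h2] [k1 k2]]]]]].
  assert (Dab : forall x, a <= x <= b -> D x) by (intros; apply (D_interval a b); auto).
  assert (Iab : forall z, f a <= z <= f b -> image D f z)
    by (intros; apply (image_between a b); auto).
  apply (continuity_pt_recip_interv f (inverse D f) a b); [lra | | | | | lra].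
  - intros u v hu huv hv. apply f_incr; auto; apply Dab; lra.
  - intros z h h'. unfold comp, id. apply inverse_spec, Iab; lra.
  - intros z h h'. destruct (inverse_spec z (Iab z (conj h h'))) as [Dz Ez].
    split; apply incr_le; auto; lra.
  - intros u hu. apply continuity_pt_ex_derive, f_derive, Dab, hu.
Qed.

Lemma is_derive_inverse y : image D f y -> Derive f (inverse D f y) <> 0 ->
  is_derive (inverse D f) y (/ Derive f (inverse D f y)).
Proof.
  intros Hy Hd. destruct (image_bracket y Hy) as [a [b [Ha [Hb [[h1 h2] [k1 k2]]]]]].
  assert (Dab : forall x, a <= x <= b -> D x) by (intros; apply (D_interval a b); auto).
  assert (Iab : forall z, f a <= z <= f b -> image D f z)
    by (intros; apply (image_between a b); auto).
  assert (Prf : forall u, inverse D f (f a) <= u <= inverse D f (f b) -> derivable_pt f u).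
  { intros u Hu. rewrite !inverse_f in Hu by auto.
    apply ex_derive_Reals_0, f_derive, Dab, Hu. }
  assert (Hg : inverse D f (f a) <= inverse D f y <= inverse D f (f b))
    by (rewrite !inverse_f by auto; lra).
  assert (Ed : derive_pt f (inverse D f y) (Prf _ Hg) = Derive f (inverse D f y)).
  { apply derive_pt_eq_0, is_derive_Reals, Derive_correct, f_derive, Dab. lra. }
  pose proof (derivable_pt_lim_recip_interv f (inverse D f) (f a) (f b) y Prf
    (continuity_pt_inverse y Hy) ltac:(lra) ltac:(lra) Hg) as K.
  rewrite Ed in K. apply is_derive_Reals.
  replace (/ Derive f (inverse D f y)) with (1 / Derive f (inverse D f y)) by (field; auto).
  apply K; auto. intros z Hz. apply inverse_spec, Iab, Hz.
Qed.

End Inverse.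

Lemma C2_on_intro D f f1 f2 : open D ->
  (forall x, D x -> is_derive f x (f1 x) /\ is_derive f1 x (f2 x) /\ continuous f2 x) ->
  C2_on D f.
Proof.
  intros HD Hf.
  assert (D1 : forall x, D x -> locally x (fun z => Derive f z = f1 z)).
  { intros x Dx. apply (locally_open D); auto. intros z Dz. apply is_derive_unique, Hf, Dz. }
  intros x Dx. destruct (Hf x Dx) as [d1 [d2 c2]]. split; [|split].
  - eexists; exact d1.
  - exists (f2 x). apply (is_derive_ext_loc f1); [|exact d2].
    apply (filter_imp (fun z => Derive f z = f1 z)); [|exact (D1 x Dx)].
    intros z E. symmetry. exact E.
  - apply (continuous_ext_loc _ f2); [|exact c2].
    apply (locally_open D); auto. intros z Dz.
    rewrite (Derive_ext_loc _ _ z (D1 z Dz)). symmetry. apply is_derive_unique, Hf, Dz.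
Qed.

Section C2Facts.
Variables (D : R -> Prop) (f : R -> R) (x : R).
Hypotheses (Hf : C2_on D f) (Dx : D x).

Lemma C2_on_is_derive : is_derive f x (Derive f x).
Proof. exact (Derive_correct _ _ (proj1 (Hf x Dx))). Qed.

Lemma C2_on_is_derive2 : is_derive (Derive f) x (Derive (Derive f) x).
Proof. exact (Derive_correct _ _ (proj1 (proj2 (Hf x Dx)))). Qed.

Lemma C2_on_continuous : continuous f x.
Proof. exact (ex_derive_continuous _ _ (proj1 (Hf x Dx))). Qed.

Lemma C2_on_continuous1 : continuous (Derive f) x.
Proof. exact (ex_derive_continuous _ _ (proj1 (proj2 (Hf x Dx)))). Qed.

End C2Facts.

Lemma C2_on_comp D E f g : open D -> open E -> C2_on D f -> C2_on E g ->
  (forall x, E x -> D (g x)) -> C2_on E (fun x => f (g x)).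
Proof.
  intros HD HE Hf Hg Hgx.
  apply (C2_on_intro E _ (fun x => Derive g x * Derive f (g x))
    (fun x => Derive (Derive g) x * Derive f (g x)
              + Derive g x * (Derive g x * Derive (Derive f) (g x)))); auto.
  intros x Ex. pose proof (Hgx x Ex) as Dgx. split; [|split].
  - apply (is_derive_comp f g); [apply (C2_on_is_derive D) | apply (C2_on_is_derive E)]; auto.
  - apply (is_derive_mult (Derive g) (fun t => Derive f (g t))); [| |apply Rmult_comm].
    + apply (C2_on_is_derive2 E); auto.
    + apply (is_derive_comp (Derive f) g);
        [apply (C2_on_is_derive2 D) | apply (C2_on_is_derive E)]; auto.
  - pose proof (C2_on_continuous E g x Hg Ex) as Cg.
    apply (continuous_plus (V := R_NormedModule)); apply (continuous_mult (K := R_AbsRing)).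
    + exact (proj2 (proj2 (Hg x Ex))).
    + apply (continuous_comp g (Derive f)); [exact Cg | apply (C2_on_continuous1 D); auto].
    + apply (C2_on_continuous1 E); auto.
    + apply (continuous_mult (K := R_AbsRing)); [apply (C2_on_continuous1 E); auto |].
      apply (continuous_comp g (Derive (Derive f)));
        [exact Cg | exact (proj2 (proj2 (Hf _ Dgx)))].
Qed.

Section Model.
Context {Theta : Type} (mu sigma : Theta -> R -> R) (xl xr : Rbar) (xstar : R).
Hypothesis xstar_in : inX xl xr xstar.
Hypothesis sigma_pos : forall th x, inX xl xr x -> 0 < sigma th x.
Hypothesis sigma2_C2 : forall th, C2_on (inX xl xr) (fun x => sigma th x ^ 2).

Local Notation D := (inX xl xr).

Lemma is_derive_sigma th x : D x ->
  is_derive (sigma th) x (Derive (fun t => sigma th t ^ 2) x / (2 * sigma th x)).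
Proof.
  intros Dx. pose proof (sigma_pos th x Dx) as Hs.
  apply (is_derive_ext_loc (fun t => sqrt (sigma th t ^ 2))).
  - apply (locally_open D); [apply open_inX | | exact Dx].
    intros t Dt. apply sqrt_pow2. left. apply sigma_pos, Dt.
  - rewrite <- (sqrt_pow2 (sigma th x)) by lra.
    apply is_derive_sqrt; [apply (C2_on_is_derive D); auto | apply pow_lt; lra].
Qed.

Lemma ex_derive_sigma th x : D x -> ex_derive (sigma th) x.
Proof. intros Dx. eexists. apply is_derive_sigma, Dx. Qed.

Lemma continuous_sigma th x : D x -> continuous (sigma th) x.
Proof. intros Dx. exact (ex_derive_continuous _ _ (ex_derive_sigma th x Dx)). Qed.

Lemma continuous_Derive_sigma th x : D x -> continuous (Derive (sigma th)) x.
Proof.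
  intros Dx.
  apply (continuous_ext_loc _ (fun t => Derive (fun t => sigma th t ^ 2) t / (2 * sigma th t))).
  - apply (locally_open D); [apply open_inX | | exact Dx].
    intros t Dt. symmetry. apply is_derive_unique, is_derive_sigma, Dt.
  - apply (continuous_mult (K := R_AbsRing)); [apply (C2_on_continuous1 D); auto |].
    apply continuous_Rinv_comp.
    + apply (continuous_mult (K := R_AbsRing));
        [apply continuous_const | apply continuous_sigma, Dx].
    + pose proof (sigma_pos th x Dx). lra.
Qed.

Lemma is_derive_gamma th x : D x -> is_derive (gamma sigma xstar th) x (/ sigma th x).
Proof.
  intros Dx. assert (Cinv : forall z, D z -> continuous (fun t => / sigma th t) z).
  { intros z Dz. apply continuous_Rinv_comp; [apply continuous_sigma, Dz |].
    pose proof (sigma_pos th z Dz). lra. }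
  apply (is_derive_RInt (fun z => / sigma th z) _ xstar); [| apply Cinv, Dx].
  apply (locally_open D); [apply open_inX | | exact Dx].
  intros b Db. apply (@RInt_correct R_CompleteNormedModule).
  apply (@ex_RInt_continuous R_CompleteNormedModule). intros z Hz.
  apply Cinv, (is_interval_between D xstar b); auto. apply is_interval_inX.
Qed.

Lemma ex_derive_gamma th x : D x -> ex_derive (gamma sigma xstar th) x.
Proof. intros Dx. eexists. apply is_derive_gamma, Dx. Qed.

Lemma gamma_xstar th : gamma sigma xstar th xstar = 0.
Proof. exact (RInt_point (V := R_CompleteNormedModule) xstar _). Qed.

Lemma gamma_incr th x y : D x -> D y -> x < y ->
  gamma sigma xstar th x < gamma sigma xstar th y.
Proof.
  intros [Hx _] [_ Hy] hxy.
  apply (incr_function _ xl xr (fun z => / sigma th z)); auto.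
  - intros z Hl Hr. apply is_derive_gamma. split; auto.
  - intros z Hl Hr. apply Rinv_0_lt_compat, sigma_pos. split; auto.
Qed.

Lemma is_derive_gamma_inv th u : inXbar sigma xl xr xstar th u ->
  is_derive (gamma_inv sigma xl xr xstar th) u (sigma th (gamma_inv sigma xl xr xstar th u)).
Proof.
  intros Hu. change (gamma_inv sigma xl xr xstar th) with (inverse D (gamma sigma xstar th)).
  destruct (inverse_spec D _ u Hu) as [Dx _].
  set (x := inverse D (gamma sigma xstar th) u) in *.
  pose proof (sigma_pos th x Dx).
  assert (E : Derive (gamma sigma xstar th) x = / sigma th x)
    by (apply is_derive_unique, is_derive_gamma, Dx).
  rewrite <- (Rinv_inv (sigma th x)), <- E.
  apply (is_derive_inverse D); auto.
  - apply open_inX.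
  - apply is_interval_inX.
  - apply gamma_incr.
  - apply ex_derive_gamma.
  - fold x. rewrite E. apply Rinv_neq_0_compat. lra.
Qed.

Lemma gamma_inv_gamma th x : D x ->
  gamma_inv sigma xl xr xstar th (gamma sigma xstar th x) = x.
Proof. apply (inverse_f D _ (gamma_incr th)). Qed.

Lemma open_inXbar th : open (inXbar sigma xl xr xstar th).
Proof.
  apply (open_image D); [apply open_inX | apply is_interval_inX | apply gamma_incr |].
  apply ex_derive_gamma.
Qed.

Lemma C2_on_gamma_inv th :
  C2_on (inXbar sigma xl xr xstar th) (gamma_inv sigma xl xr xstar th).
Proof.
  set (G := gamma_inv sigma xl xr xstar th).
  apply (C2_on_intro _ G (fun u => sigma th (G u))
    (fun u => sigma th (G u) * Derive (sigma th) (G u))); [apply open_inXbar|].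
  intros u Hu. destruct (inverse_spec D _ u Hu) as [Du _]. fold G in Du.
  assert (CG : continuous G u).
  { apply continuity_pt_filterlim, (continuity_pt_inverse D); auto.
    apply open_inX. apply is_interval_inX. apply gamma_incr. apply ex_derive_gamma. }
  split; [|split].
  - apply is_derive_gamma_inv, Hu.
  - apply (is_derive_comp (sigma th) G);
      [apply Derive_correct, ex_derive_sigma, Du | apply is_derive_gamma_inv, Hu].
  - apply (continuous_mult (K := R_AbsRing)); apply (continuous_comp G); auto.
    + apply continuous_sigma, Du.
    + apply continuous_Derive_sigma, Du.
Qed.

Lemma is_derive_gamma_shift th eta x : D x ->
  is_derive (fun x => gamma sigma xstar th x + eta) x (/ sigma th x).
Proof.
  intros Dx. rewrite <- Rplus_0_r. apply (is_derive_plus (gamma sigma xstar th)).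
  - apply is_derive_gamma, Dx.
  - apply (is_derive_const (K := R_AbsRing) (V := R_NormedModule)).
Qed.

Lemma C2_on_gamma_shift th eta : C2_on D (fun x => gamma sigma xstar th x + eta).
Proof.
  apply (C2_on_intro D _ (fun x => / sigma th x)
    (fun x => - Derive (sigma th) x / sigma th x ^ 2)); [apply open_inX|].
  intros x Dx. pose proof (sigma_pos th x Dx). split; [|split].
  - apply is_derive_gamma_shift, Dx.
  - apply is_derive_inv; [apply Derive_correct, ex_derive_sigma, Dx | lra].
  - apply (continuous_mult (K := R_AbsRing)).
    + apply (continuous_opp (V := R_NormedModule)), continuous_Derive_sigma, Dx.
    + apply continuous_Rinv_comp; [apply (C2_on_continuous D); auto | apply pow_nonzero; lra].
Qed.

Definition lampertiY (th : Theta) (V : R -> R) (y : R) : R :=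
  gamma sigma xstar th (Uinv xl xr V y).

Section Structure.
Variables (th : Theta) (V : R -> R).
Hypothesis V_adm : admissible xl xr V.

Local Notation U := (Uinv xl xr V).

Lemma Uinv_spec y : imageV xl xr V y -> D (U y) /\ V (U y) = y.
Proof. apply (inverse_spec D V). Qed.

Lemma Uinv_V x : D x -> U (V x) = x.
Proof. apply (inverse_f D V (proj1 V_adm)). Qed.

Lemma lampertiY_V x : D x -> lampertiY th V (V x) = gamma sigma xstar th x.
Proof. intros Dx. unfold lampertiY. rewrite Uinv_V by exact Dx. reflexivity. Qed.

Lemma ex_derive_V x : D x -> ex_derive V x.
Proof. intros Dx. exact (proj1 (proj1 (proj2 V_adm) x Dx)). Qed.

Lemma open_imageV : open (imageV xl xr V).
Proof.
  apply (open_image D); [apply open_inX | apply is_interval_inX | apply V_adm | apply ex_derive_V].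
Qed.

Lemma is_derive_Uinv y : imageV xl xr V y -> is_derive U y (/ Derive V (U y)).
Proof.
  intros Hy. destruct (Uinv_spec y Hy) as [Dx _]. pose proof (proj2 (proj2 V_adm) _ Dx).
  apply (is_derive_inverse D V); [apply open_inX | apply is_interval_inX | apply V_adm |
    apply ex_derive_V | exact Hy | apply Rgt_not_eq; assumption].
Qed.

Lemma is_derive_Derive_Uinv y : imageV xl xr V y ->
  is_derive (Derive U) y (- (/ Derive V (U y) * Derive (Derive V) (U y)) / Derive V (U y) ^ 2).
Proof.
  intros Hy. destruct (Uinv_spec y Hy) as [Dx _]. pose proof (proj2 (proj2 V_adm) _ Dx).
  apply (is_derive_ext_loc (fun z => / Derive V (U z))).
  - apply (locally_open (imageV xl xr V)); [exact open_imageV | | exact Hy].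
    intros z Hz. symmetry. apply is_derive_unique, is_derive_Uinv, Hz.
  - apply (is_derive_inv (fun z => Derive V (U z))); [|lra].
    apply (is_derive_comp (Derive V) U); [apply (C2_on_is_derive2 D) | apply is_derive_Uinv];
      auto; apply V_adm.
Qed.

Lemma sigmaY_eq y : imageV xl xr V y ->
  sigmaY sigma xl xr th V y = sigma th (U y) * Derive V (U y).
Proof.
  intros Hy. destruct (Uinv_spec y Hy) as [Dx _]. pose proof (proj2 (proj2 V_adm) _ Dx).
  unfold sigmaY. rewrite (is_derive_unique _ _ _ (is_derive_Uinv y Hy)). field. lra.
Qed.

Lemma muY_eq y : imageV xl xr V y -> muY mu sigma xl xr th V y =
  mu th (U y) * Derive V (U y) + / 2 * sigma th (U y) ^ 2 * Derive (Derive V) (U y).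
Proof.
  intros Hy. destruct (Uinv_spec y Hy) as [Dx _]. pose proof (proj2 (proj2 V_adm) _ Dx).
  unfold muY. rewrite (is_derive_unique _ _ _ (is_derive_Uinv y Hy)),
    (is_derive_unique _ _ _ (is_derive_Derive_Uinv y Hy)). field. lra.
Qed.

Lemma is_derive_sigmaY y : imageV xl xr V y -> is_derive (sigmaY sigma xl xr th V) y
  (Derive (sigma th) (U y) + sigma th (U y) * Derive (Derive V) (U y) / Derive V (U y)).
Proof.
  intros Hy. destruct (Uinv_spec y Hy) as [Dx _]. pose proof (proj2 (proj2 V_adm) _ Dx).
  apply (is_derive_ext_loc (fun z => sigma th (U z) * Derive V (U z))).
  - apply (locally_open (imageV xl xr V)); [exact open_imageV | | exact Hy].
    intros z Hz. symmetry. apply sigmaY_eq, Hz.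
  - replace (Derive (sigma th) (U y) + _) with
      (/ Derive V (U y) * Derive (sigma th) (U y) * Derive V (U y)
       + sigma th (U y) * (/ Derive V (U y) * Derive (Derive V) (U y))) by (field; lra).
    apply (is_derive_mult (fun z => sigma th (U z)) (fun z => Derive V (U z)));
      [| | apply Rmult_comm].
    + apply (is_derive_comp (sigma th) U);
        [apply Derive_correct, ex_derive_sigma, Dx | apply is_derive_Uinv, Hy].
    + apply (is_derive_comp (Derive V) U);
        [apply (C2_on_is_derive2 D); [apply V_adm | exact Dx] | apply is_derive_Uinv, Hy].
Qed.

Lemma is_derive_lampertiY y : imageV xl xr V y ->
  is_derive (lampertiY th V) y (/ sigmaY sigma xl xr th V y).
Proof.
  intros Hy. destruct (Uinv_spec y Hy) as [Dx _]. pose proof (proj2 (proj2 V_adm) _ Dx).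
  pose proof (sigma_pos th _ Dx).
  rewrite sigmaY_eq by exact Hy.
  replace (/ (sigma th (U y) * Derive V (U y)))
    with (/ Derive V (U y) * / sigma th (U y)) by (field; lra).
  apply (is_derive_comp (gamma sigma xstar th) U);
    [apply is_derive_gamma, Dx | apply is_derive_Uinv, Hy].
Qed.

Lemma muXbar_lampertiY y : imageV xl xr V y ->
  muXbar mu sigma xl xr xstar th (lampertiY th V y) =
  muY mu sigma xl xr th V y / sigmaY sigma xl xr th V y
  - / 2 * Derive (sigmaY sigma xl xr th V) y.
Proof.
  intros Hy. destruct (Uinv_spec y Hy) as [Dx _]. pose proof (proj2 (proj2 V_adm) _ Dx).
  pose proof (sigma_pos th _ Dx).
  rewrite (is_derive_unique _ _ _ (is_derive_sigmaY y Hy)), sigmaY_eq, muY_eq by exact Hy.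
  unfold muXbar, lampertiY. rewrite gamma_inv_gamma by exact Dx. field. lra.
Qed.

End Structure.

Definition lamperti_drift_shift (th' th : Theta) (eta : R) : Prop :=
  (forall xb, inXbar sigma xl xr xstar th' xb <-> inXbar sigma xl xr xstar th (xb + eta)) /\
  (forall xb, inXbar sigma xl xr xstar th' xb ->
     muXbar mu sigma xl xr xstar th' xb = muXbar mu sigma xl xr xstar th (xb + eta)).

Section Equivalent.
Variables (th th' : Theta) (V V' : R -> R).
Hypotheses (V_adm : admissible xl xr V) (V'_adm : admissible xl xr V').
Hypothesis equiv : obs_equiv mu sigma xl xr th V th' V'.

Lemma obs_equiv_lampertiY y : imageV xl xr V y ->
  lampertiY th' V' y = lampertiY th V y + (lampertiY th' V' (V xstar) - lampertiY th V (V xstar)).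
Proof.
  intros Hy.
  enough (E : lampertiY th' V' y - lampertiY th V y
              = lampertiY th' V' (V xstar) - lampertiY th V (V xstar)) by lra.
  apply (is_derive_0_const (imageV xl xr V) (fun z => lampertiY th' V' z - lampertiY th V z));
    [| | exact Hy | exists xstar; auto].
  - apply (is_interval_image D); [apply is_interval_inX | apply V_adm | apply ex_derive_V, V_adm].
  - intros z Hz. destruct (proj2 equiv z Hz) as [_ Es].
    replace 0 with (/ sigmaY sigma xl xr th' V' z - / sigmaY sigma xl xr th V z)
      by (rewrite Es; ring).
    apply (is_derive_minus (lampertiY th' V') (lampertiY th V));
      apply is_derive_lampertiY; auto. apply (proj1 equiv), Hz.
Qed.

Lemma obs_equiv_muXbar y : imageV xl xr V y ->
  muXbar mu sigma xl xr xstar th' (lampertiY th' V' y)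
  = muXbar mu sigma xl xr xstar th (lampertiY th V y).
Proof.
  intros Hy. destruct (proj2 equiv y Hy) as [Em Es].
  rewrite !muXbar_lampertiY by (auto; apply (proj1 equiv), Hy).
  rewrite Em, Es. do 2 f_equal. apply Derive_ext_loc.
  apply (locally_open (imageV xl xr V)); [apply open_imageV, V_adm | | exact Hy].
  intros z Hz. symmetry. apply (proj2 equiv z Hz).
Qed.

Lemma obs_equiv_lamperti_drift_shift :
  lamperti_drift_shift th' th (lampertiY th V (V xstar) - lampertiY th' V' (V xstar)).
Proof.
  set (eta := lampertiY th V (V xstar) - lampertiY th' V' (V xstar)).
  assert (Shift : forall x, D x -> imageV xl xr V (V' x) /\
            gamma sigma xstar th' x + eta = lampertiY th V (V' x)).
  { intros x Dx. assert (Hy : imageV xl xr V (V' x)) by (apply (proj1 equiv); exists x; auto).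
    split; [exact Hy|].
    rewrite <- (lampertiY_V th' V' V'_adm x Dx), obs_equiv_lampertiY by exact Hy.
    unfold eta. ring. }
  split; [intros xb; split|].
  - intros [x [Dx <-]]. destruct (Shift x Dx) as [Hy ->].
    exists (Uinv xl xr V (V' x)). split; [apply Uinv_spec, Hy | reflexivity].
  - intros [x [Dx Ex]]. assert (Hy : imageV xl xr V (V x)) by (exists x; auto).
    exists (Uinv xl xr V' (V x)). split; [apply Uinv_spec, (proj1 equiv), Hy|].
    fold (lampertiY th' V' (V x)). rewrite obs_equiv_lampertiY, lampertiY_V by auto.
    unfold eta in Ex. lra.
  - intros xb [x [Dx <-]]. destruct (Shift x Dx) as [Hy ->].
    rewrite <- (lampertiY_V th' V' V'_adm x Dx). apply obs_equiv_muXbar, Hy.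
Qed.

End Equivalent.

Lemma identified_of_no_lamperti_drift_shift th V : admissible xl xr V ->
  ~ (exists th' eta, (th' <> th \/ eta <> 0) /\ lamperti_drift_shift th' th eta) ->
  identified mu sigma xl xr th V.
Proof.
  intros HV Hno th' V' HV' Heq.
  pose proof (obs_equiv_lamperti_drift_shift th th' V V' HV HV' Heq) as Hs.
  set (eta := lampertiY th V (V xstar) - lampertiY th' V' (V xstar)) in Hs.
  assert (Eth : th' = th) by (apply NNPP; intros Hne; apply Hno; exists th', eta; auto).
  assert (Eeta : eta = 0) by (apply NNPP; intros Hne; apply Hno; exists th', eta; auto).
  subst th'. split; [reflexivity|]. intros x Dx.
  assert (Hy : imageV xl xr V (V x)) by (exists x; auto).
  assert (Hy' : imageV xl xr V' (V x)) by (apply (proj1 Heq), Hy).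
  destruct (Uinv_spec V' (V x) Hy') as [Dx' Ex'].
  assert (E : Uinv xl xr V' (V x) = x).
  { apply (incr_inj D (gamma sigma xstar th) (gamma_incr th)); auto.
    fold (lampertiY th V' (V x)).
    rewrite (obs_equiv_lampertiY th th V V' HV HV' Heq), lampertiY_V by auto.
    unfold eta in Eeta. lra. }
  rewrite E in Ex'. exact Ex'.
Qed.

Section Shifted.
Variables (th th' : Theta) (eta : R) (V : R -> R).
Hypothesis V_adm : admissible xl xr V.
Hypothesis shift : lamperti_drift_shift th' th eta.

Local Notation G := (gamma_inv sigma xl xr xstar th).
Local Notation h x := (gamma sigma xstar th' x + eta).

Definition shifted_transform (x : R) : R := V (G (h x)).

Lemma shift_inXbar x : D x -> inXbar sigma xl xr xstar th (h x).
Proof. intros Dx. apply (proj1 shift). exists x; auto. Qed.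

Lemma gamma_inv_shift_spec x : D x -> D (G (h x)) /\ gamma sigma xstar th (G (h x)) = h x.
Proof. intros Dx. apply (inverse_spec D), shift_inXbar, Dx. Qed.

Lemma admissible_shifted_transform : admissible xl xr shifted_transform.
Proof.
  destruct V_adm as [V_incr [V_C2 V_pos]].
  split; [|split].
  - intros x y Dx Dy hxy. unfold shifted_transform.
    apply V_incr; [apply gamma_inv_shift_spec; auto .. |].
    apply (inverse_incr D _ (gamma_incr th)); [apply shift_inXbar; auto .. |].
    pose proof (gamma_incr th' x y Dx Dy hxy). lra.
  - apply (C2_on_comp D D V (fun x => G (h x))); [apply open_inX | apply open_inX | exact V_C2 | |].
    + apply (C2_on_comp (inXbar sigma xl xr xstar th) D);
        [apply open_inXbar | apply open_inX | apply C2_on_gamma_inv | apply C2_on_gamma_shift |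
         exact shift_inXbar].
    + intros x Dx. apply gamma_inv_shift_spec, Dx.
  - intros x Dx. destruct (gamma_inv_shift_spec x Dx) as [DG _].
    pose proof (sigma_pos th' x Dx). pose proof (sigma_pos th _ DG). pose proof (V_pos _ DG).
    rewrite (is_derive_unique shifted_transform x
      (/ sigma th' x * sigma th (G (h x)) * Derive V (G (h x)))).
    + apply Rmult_lt_0_compat; [apply Rmult_lt_0_compat; [apply Rinv_0_lt_compat|]|]; lra.
    + apply (is_derive_comp V (fun x => G (h x))); [apply Derive_correct, V_C2, DG |].
      apply (is_derive_comp G (fun x => h x)); [apply is_derive_gamma_inv, shift_inXbar, Dx |].
      apply is_derive_gamma_shift, Dx.
Qed.

Lemma imageV_shifted_transform y :
  imageV xl xr shifted_transform y <-> imageV xl xr V y.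
Proof.
  split.
  - intros [x [Dx <-]]. exists (G (h x)). split; [apply gamma_inv_shift_spec, Dx | reflexivity].
  - intros [x0 [Dx0 <-]].
    assert (Hb : inXbar sigma xl xr xstar th' (gamma sigma xstar th x0 - eta)).
    { apply (proj1 shift). replace (_ - eta + eta) with (gamma sigma xstar th x0) by ring.
      exists x0; auto. }
    destruct Hb as [x [Dx Ex]]. exists x. split; [exact Dx|].
    unfold shifted_transform. rewrite Ex.
    replace (_ - eta + eta) with (gamma sigma xstar th x0) by ring.
    rewrite gamma_inv_gamma by exact Dx0. reflexivity.
Qed.

Lemma lampertiY_shifted_transform y : imageV xl xr V y ->
  lampertiY th' shifted_transform y = lampertiY th V y - eta.
Proof.
  intros Hy. apply imageV_shifted_transform in Hy.
  destruct (Uinv_spec shifted_transform y Hy) as [Dx Ex].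
  set (x := Uinv xl xr shifted_transform y) in *.
  destruct (gamma_inv_shift_spec x Dx) as [DG EG].
  assert (E : Uinv xl xr V y = G (h x)) by (rewrite <- Ex; exact (Uinv_V V V_adm _ DG)).
  unfold lampertiY. fold x. rewrite E, EG. ring.
Qed.

Lemma sigmaY_shifted_transform y : imageV xl xr V y ->
  sigmaY sigma xl xr th' shifted_transform y = sigmaY sigma xl xr th V y.
Proof.
  intros Hy. apply Rinv_eq_reg.
  rewrite <- (is_derive_unique _ _ _ (is_derive_lampertiY th' _ admissible_shifted_transform y
    (proj2 (imageV_shifted_transform y) Hy))).
  apply is_derive_unique.
  apply (is_derive_ext_loc (fun z => lampertiY th V z - eta)).
  - apply (locally_open (imageV xl xr V)); [apply open_imageV, V_adm | | exact Hy].
    intros z Hz. symmetry. apply lampertiY_shifted_transform, Hz.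
  - rewrite <- Rminus_0_r. apply (is_derive_minus (lampertiY th V)).
    + apply is_derive_lampertiY; auto.
    + apply (is_derive_const (K := R_AbsRing) (V := R_NormedModule)).
Qed.

Lemma muY_shifted_transform y : imageV xl xr V y ->
  muY mu sigma xl xr th' shifted_transform y = muY mu sigma xl xr th V y.
Proof.
  intros Hy. pose proof (proj2 (imageV_shifted_transform y) Hy) as HyW.
  destruct (Uinv_spec V y Hy) as [Dx _].
  assert (Hs : 0 < sigmaY sigma xl xr th V y).
  { rewrite sigmaY_eq by auto. apply Rmult_lt_0_compat; [apply sigma_pos | apply V_adm]; exact Dx. }
  assert (Hxb : inXbar sigma xl xr xstar th' (lampertiY th V y - eta)).
  { apply (proj1 shift). replace (_ - eta + eta) with (lampertiY th V y) by ring.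
    exists (Uinv xl xr V y). split; [exact Dx | reflexivity]. }
  assert (Em : muXbar mu sigma xl xr xstar th' (lampertiY th' shifted_transform y)
               = muXbar mu sigma xl xr xstar th (lampertiY th V y)).
  { rewrite lampertiY_shifted_transform, (proj2 shift) by auto. f_equal. ring. }
  rewrite (muXbar_lampertiY th' _ admissible_shifted_transform y HyW),
    (muXbar_lampertiY th V V_adm y Hy), sigmaY_shifted_transform in Em by exact Hy.
  assert (ED : Derive (sigmaY sigma xl xr th' shifted_transform) y
               = Derive (sigmaY sigma xl xr th V) y).
  { apply Derive_ext_loc.
    apply (locally_open (imageV xl xr V)); [apply open_imageV, V_adm | | exact Hy].
    intros z Hz. apply sigmaY_shifted_transform, Hz. }
  rewrite ED in Em.
  apply (Rmult_eq_reg_r (/ sigmaY sigma xl xr th V y)); [lra | apply Rinv_neq_0_compat; lra].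
Qed.

Lemma obs_equiv_shifted_transform : obs_equiv mu sigma xl xr th V th' shifted_transform.
Proof.
  split.
  - intros y. symmetry. apply imageV_shifted_transform.
  - intros y Hy. split; symmetry;
      [apply muY_shifted_transform | apply sigmaY_shifted_transform]; exact Hy.
Qed.

Lemma shifted_transform_xstar : shifted_transform xstar = V xstar -> eta = 0.
Proof.
  intros E. destruct (gamma_inv_shift_spec xstar xstar_in) as [DG EG].
  assert (EG' : G (h xstar) = xstar) by (apply (incr_inj D V (proj1 V_adm)); auto).
  rewrite EG', !gamma_xstar in EG. lra.
Qed.

End Shifted.

Lemma no_lamperti_drift_shift_of_identified th V : admissible xl xr V ->
  identified mu sigma xl xr th V ->
  ~ (exists th' eta, (th' <> th \/ eta <> 0) /\ lamperti_drift_shift th' th eta).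
Proof.
  intros HV Hid [th' [eta [Hne Hs]]].
  destruct (Hid th' (shifted_transform th th' eta V)) as [-> EW].
  - apply admissible_shifted_transform; auto.
  - apply obs_equiv_shifted_transform; auto.
  - destruct Hne as [Hne | Hne]; apply Hne; [reflexivity |].
    apply (shifted_transform_xstar th th eta V HV Hs), EW, xstar_in.
Qed.

End Model.

Theorem corollary4
  (Theta : Type) (mu sigma : Theta -> R -> R) (xl xr : Rbar)
  (Hlr : Rbar_lt xl xr)
  (xstar : R) (Hxstar : inX xl xr xstar)
  (Hmu : forall th, C2_on (inX xl xr) (mu th))
  (Hsig_pos : forall th x, inX xl xr x -> 0 < sigma th x)
  (Hsig2 : forall th, C2_on (inX xl xr) (fun x => (sigma th x) ^ 2))
  (theta : Theta) (V : R -> R) (HV : admissible xl xr V) :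
  identified mu sigma xl xr theta V <->
  ~ (exists (theta' : Theta) (eta : R),
       (theta' <> theta \/ eta <> 0) /\
       (forall xb, inXbar sigma xl xr xstar theta' xb <->
                   inXbar sigma xl xr xstar theta (xb + eta)) /\
       (forall xb, inXbar sigma xl xr xstar theta' xb ->
          muXbar mu sigma xl xr xstar theta' xb =
          muXbar mu sigma xl xr xstar theta (xb + eta))).
Proof.
  split.
  - exact (no_lamperti_drift_shift_of_identified mu sigma xl xr xstar Hxstar Hsig_pos Hsig2
      theta V HV).
  - exact (identified_of_no_lamperti_drift_shift mu sigma xl xr xstar Hxstar Hsig_pos Hsig2
      theta V HV).
Qed.
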